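(* Let $H$ be a bipartite matching covered graph and $u$ a vertex of $H$ of degree at least three. If $f_1$ and $f_2$ are two edges incident with $u$ that lie in a common 4-cycle of $H$, then at least one of $f_1,f_2$ is removable in $H$.
   Context: Graphs may have multiple edges but no loops. An edge is admissible if it lies in some perfect matching. A connected graph with at least two vertices is matching covered if every edge is admissible. An edge $e$ of a matching covered graph $H$ is removable if $H-e$ is matching covered. *)

(* A graph is given by a finite vertex type V, a finite type E of edge
   names, endpoint maps ep1 ep2 : E -> V (loopless: ep1 e != ep2 e), and
   an edge set F : {set E}; the graph is (V, F).  Deleting an edge e is
   F :\ e.  Parallel edges are allowed (distinct edge names with the same
   endpoints). *)
From mathcomp Require Import all_boot.
Set Implicit Arguments. Unset Strict Implicit. Unset Printing Implicit Defensive.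

Section Graphs.
Variables (V E : finType) (ep1 ep2 : E -> V).

Definition incident (e : E) (v : V) : bool := (ep1 e == v) || (ep2 e == v).

Definition joins (e : E) (x y : V) : bool :=
  ((ep1 e == x) && (ep2 e == y)) || ((ep1 e == y) && (ep2 e == x)).

Definition deg (F : {set E}) (v : V) : nat := #|[set e in F | incident e v]|.

Definition adj (F : {set E}) : rel V := fun x y => [exists e in F, joins e x y].

Definition connected_graph (F : {set E}) : Prop :=
  forall x y : V, connect (adj F) x y.

Definition perfect_matching (F M : {set E}) : Prop :=
  M \subset F /\ forall v : V, #|[set e in M | incident e v]| = 1.

Definition admissible (F : {set E}) (e : E) : Prop :=
  exists M : {set E}, perfect_matching F M /\ e \in M.

Definition matching_covered (F : {set E}) : Prop :=
  connected_graph F /\ 2 <= #|V| /\ forall e, e \in F -> admissible F e.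

Definition removable (F : {set E}) (e : E) : Prop :=
  e \in F /\ matching_covered (F :\ e).

Definition bipartite (F : {set E}) : Prop :=
  exists A : {set V}, forall e, e \in F -> (ep1 e \in A) != (ep2 e \in A).

Definition in_common_4cycle (F : {set E}) (u : V) (f1 f2 : E) : Prop :=
  exists (a w b : V) (g1 g2 : E),
    [/\ uniq [:: u; a; w; b],
        [&& f1 \in F, g1 \in F, g2 \in F & f2 \in F],
        joins f1 u a, joins g1 a w & joins g2 w b /\ joins f2 b u].

End Graphs.

(* Let X be the colour class of u and N(S) the neighbourhood of S ⊆ X.  A connected
   bipartite graph with colour classes of equal size is matching covered iff
   |N(S)| > |S| for every nonempty S ⊊ X: Hall's theorem gives one direction, and a
   perfect matching through an edge leaving S ∪ N(S) gives the other.  For f = ua the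
   4-cycle keeps H - f connected, so if f is not removable some nonempty S ⊊ X has
   |N_{H-f}(S)| ≤ |S|; as |N_H(S)| > |S|, such an S contains u, reaches a only through f,
   and has |N_H(S)| ≤ |S| + 1.  Suppose such barriers T1 for f1 = ua and T2 for f2 = ub
   both exist.  The vertex w opposite to u lies in neither, so submodularity of |N| and
   |N(T1 ∪ T2)| > |T1 ∪ T2| give |N(T1 ∩ T2)| ≤ |T1 ∩ T2| + 1.  But a and b are seen from
   T1 ∩ T2 only by u, and a third edge at u supplies one more neighbour, so
   |N(T1 ∩ T2)| ≥ |T1 ∩ T2| + 2. *)

From Pilot Require Import Defs.
From mathcomp Require Import all_boot.
From mathcomp Require Import zify.
Set Implicit Arguments. Unset Strict Implicit. Unset Printing Implicit Defensive.

Section Hall.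
Variables (T : finType) (r : rel T).

Definition nbhd (B S : {set T}) : {set T} := [set y in B | [exists x in S, r x y]].

Lemma nbhdP (B S : {set T}) y :
  reflect (y \in B /\ exists2 x, x \in S & r x y) (y \in nbhd B S).
Proof.
rewrite inE; apply: (iffP andP) => [[yB /existsP[x /andP[xS rxy]]]|[yB [x xS rxy]]].
  by split=> //; exists x.
by split=> //; apply/existsP; exists x; rewrite xS.
Qed.

Lemma nbhdS (B S1 S2 : {set T}) : S1 \subset S2 -> nbhd B S1 \subset nbhd B S2.
Proof.
move=> /subsetP S12; apply/subsetP=> y /nbhdP[yB [x /S12 xS rxy]].
by apply/nbhdP; split=> //; exists x.
Qed.

Lemma nbhdU (B S1 S2 : {set T}) : nbhd B (S1 :|: S2) = nbhd B S1 :|: nbhd B S2.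
Proof.
apply/setP=> y; rewrite !inE -andb_orr; congr (_ && _).
apply/existsP/orP=> [[x /andP[]]|[]/existsP[x /andP[xS rxy]]].
- by rewrite inE => /orP[] xS rxy; [left | right]; apply/existsP; exists x; rewrite xS.
- by exists x; rewrite inE xS.
- by exists x; rewrite inE xS orbT.
Qed.

Definition matching_fun (A B : {set T}) (g : T -> T) : Prop :=
  {in A, forall x, g x \in B /\ r x (g x)} /\ {in A &, injective g}.

Definition matchable (A B : {set T}) : Prop := exists g, matching_fun A B g.

Definition hall_condition (A B : {set T}) : Prop :=
  forall S : {set T}, S \subset A -> #|S| <= #|nbhd B S|.

Lemma matching_fun_glue (A B S C : {set T}) g1 g2 :
  matching_fun S (B :&: C) g1 -> matching_fun (A :\: S) (B :\: C) g2 ->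
  matching_fun A B (fun x => if x \in S then g1 x else g2 x).
Proof.
move=> [g1P g1I] [g2P g2I].
have g2P' x : x \in A -> x \notin S -> g2 x \notin C /\ g2 x \in B /\ r x (g2 x).
  by move=> xA xS; have [] := g2P x; rewrite ?inE ?xA ?xS // => /andP[-> ->].
split=> [x xA|x1 x2 x1A x2A].
  case: ifP => xS; first by have [/setIP[]] := g1P x xS.
  by have [_] := g2P' x xA (negbT xS).
have g12 x1' x2' : x1' \in S -> x2' \in A -> x2' \notin S -> g1 x1' != g2 x2'.
  move=> x1S x2A' x2S; have [/setIP[_ gC] _] := g1P _ x1S.
  by apply: contraNneq (g2P' _ x2A' x2S).1 => <-.
case: ifPn => x1S; case: ifPn => x2S /eqP.
- by move/eqP; apply: g1I.
- by rewrite (negbTE (g12 _ _ x1S x2A x2S)).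
- by rewrite eq_sym (negbTE (g12 _ _ x2S x1A x1S)).
- by move/eqP; apply: g2I; rewrite inE ?x1S ?x2S.
Qed.

Lemma matchable_glue (A B S C : {set T}) :
  matchable S (B :&: C) -> matchable (A :\: S) (B :\: C) -> matchable A B.
Proof. by move=> [g1 g1M] [g2 g2M]; eexists; apply: matching_fun_glue g1M g2M. Qed.

Lemma matchable_nbhd (S B : {set T}) : matchable S B -> matchable S (B :&: nbhd B S).
Proof.
move=> [g [gP gI]]; exists g; split=> // x xS; have [gB rxg] := gP x xS.
by rewrite !inE gB; split=> //; apply/existsP; exists x; rewrite xS.
Qed.

Lemma hall_condition_tight (A B S : {set T}) :
  hall_condition A B -> S \subset A -> #|nbhd B S| <= #|S| ->
  hall_condition (A :\: S) (B :\: nbhd B S).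
Proof.
move=> hallAB SA tight S' S'AS.
have SS'0 : S :&: S' = set0.
  by apply/setP=> x; rewrite !inE; apply/andP=> -[xS /(subsetP S'AS)]; rewrite inE xS.
have SS'A : S :|: S' \subset A by rewrite subUset SA (subset_trans S'AS) ?subsetDl.
have sub : nbhd B S :|: nbhd B S' \subset nbhd B S :|: nbhd (B :\: nbhd B S) S'.
  apply/subsetP=> y; rewrite !in_setU => /orP[->//|/nbhdP[yB [x xS' rxy]]].
  have [//|yN /=] := boolP (y \in nbhd B S).
  by apply/nbhdP; split; [rewrite in_setD yN | exists x].
have := hallAB _ SS'A; rewrite nbhdU => /leq_trans/(_ (subset_leq_card sub)).
have := cardsUI S S'; have := cardsUI (nbhd B S) (nbhd (B :\: nbhd B S) S').
rewrite SS'0 cards0; lia.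
Qed.

Lemma hall_condition_setD1 (A B : {set T}) x y :
  (forall S : {set T}, S \subset A :\ x -> S != set0 -> #|S| < #|nbhd B S|) ->
  hall_condition (A :\ x) (B :\ y).
Proof.
move=> surplusA S SA; have [->|S0] := eqVneq S set0; first by rewrite cards0.
have sub : nbhd B S \subset y |: nbhd (B :\ y) S.
  apply/subsetP=> z /nbhdP[zB [t tS rtz]]; rewrite in_setU1.
  have [//|zy /=] := eqVneq z y.
  by apply/nbhdP; split; [rewrite in_setD1 zy | exists t].
have := subset_leq_card sub; rewrite cardsU1 => le.
by have := surplusA S SA S0; case: (y \notin _) le => /=; lia.
Qed.

(* Halmos-Vaughan induction: split A along a tight subset if there is one, otherwise
   match any x to any of its neighbours. *)
Theorem hall (A B : {set T}) : hall_condition A B -> matchable A B.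
Proof.
have [n] := ubnP #|A|; elim: n A B => // n IH A B ltAn hallAB.
have [->|[x xA]] := set_0Vmem A; first by exists id; split=> ?; rewrite inE.
have [|noTight] := boolP [exists S : {set T},
  [&& S \subset A, S != set0, S != A & #|nbhd B S| <= #|S|]].
  case/existsP=> S /and4P[SA S0 SnA tight].
  have SpA : S \proper A by rewrite properEneq SnA SA.
  apply: (matchable_glue (C := nbhd B S)).
    apply/matchable_nbhd/IH; first by have := proper_card SpA; lia.
    by move=> S' S'S; apply: hallAB (subset_trans S'S SA).
  apply: IH (hall_condition_tight hallAB SA tight).
  have [s sS] := set0Pn _ S0.
  have : A :\: S \proper A.
    by apply/properP; split; [exact: subsetDl | exists s; rewrite ?inE ?sS ?(subsetP SA)].
  by move/proper_card; lia.
have [y /nbhdP[yB [_ /set1P-> rxy]]] : exists y, y \in nbhd B [set x].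
  by apply/set0Pn; rewrite -card_gt0 -(cards1 x) hallAB ?sub1set.
apply: (matchable_glue (S := [set x]) (C := [set y])).
  by exists (fun=> y); split=> [_ /set1P->|? ? /set1P-> /set1P->] //; rewrite !inE eqxx yB.
apply: IH; first by rewrite (cardsD1 x) xA in ltAn.
apply: hall_condition_setD1 => S SAx S0.
have SA : S \subset A := subset_trans SAx (subsetDl _ _).
have SnA : S != A.
  by apply: contraTneq SAx => ->; apply/subsetPn; exists x; rewrite ?inE ?eqxx.
by move: noTight; rewrite negb_exists => /forallP/(_ S); rewrite SA S0 SnA ltnNge.
Qed.

End Hall.

Section Graphs.
Variables (V E : finType) (ep1 ep2 : E -> V).
Hypothesis loopless : forall e : E, ep1 e != ep2 e.

Local Notation incident := (incident ep1 ep2).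
Local Notation joins := (joins ep1 ep2).
Local Notation adj := (adj ep1 ep2).
Local Notation connected_graph := (connected_graph ep1 ep2).
Local Notation perfect_matching := (perfect_matching ep1 ep2).

Lemma joinsC e x y : joins e x y = joins e y x.
Proof. by rewrite /Defs.joins orbC. Qed.

Lemma joins_incident e x y : joins e x y -> incident e x /\ incident e y.
Proof. by rewrite /Defs.joins /Defs.incident => /orP[]/andP[-> ->]; rewrite ?orbT. Qed.

Lemma incident_joins e x y v : joins e x y -> incident e v -> v = x \/ v = y.
Proof.
by rewrite /Defs.joins /Defs.incident => /orP[]/andP[/eqP-> /eqP->] /orP[]/eqP->; auto.
Qed.

Lemma joins_neq e x y : joins e x y -> x != y.
Proof.
by have := loopless e; rewrite /Defs.joins => ne /orP[]/andP[/eqP<- /eqP<-]; rewrite // eq_sym.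
Qed.

Lemma joins_eq e x y z : joins e x y -> joins e x z -> y = z.
Proof.
move=> jxy jxz; have [_ /(incident_joins jxy) [zx|//]] := joins_incident jxz.
by move: (joins_neq jxz); rewrite zx eqxx.
Qed.

Lemma edge_neq e e' x y z t : joins e x y -> joins e' z t -> z != x -> z != y -> e != e'.
Proof.
move=> j j' zx zy; apply: contraTneq (joins_incident j').1 => <-.
by apply/negP => /(incident_joins j) []; apply/eqP.
Qed.

Definition other_end (e : E) (v : V) : V := if ep1 e == v then ep2 e else ep1 e.

Lemma joins_other_end e v : incident e v -> joins e v (other_end e v).
Proof.
rewrite /Defs.incident /Defs.joins /other_end => /orP[/eqP<-|/eqP<-]; first by rewrite !eqxx.
by rewrite (negbTE (loopless e)) !eqxx orbT.
Qed.

Lemma adjP (F : {set E}) x y : reflect (exists2 e, e \in F & joins e x y) (adj F x y).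
Proof.
by apply: (iffP existsP) => [[e /andP[eF j]]|[e eF j]]; [exists e | exists e; rewrite eF].
Qed.

Lemma adj_edge (F : {set E}) e x y : e \in F -> joins e x y -> adj F x y.
Proof. by move=> eF j; apply/adjP; exists e. Qed.

Lemma adj_sym (F : {set E}) : symmetric (adj F).
Proof. by move=> x y; apply/adjP/adjP=> -[e eF j]; exists e; rewrite // joinsC. Qed.

Lemma mem_nbhd_edge (F : {set E}) (B S : {set V}) e x y :
  e \in F -> joins e x y -> x \in S -> y \in B -> y \in nbhd (adj F) B S.
Proof. by move=> eF j xS yB; apply/nbhdP; split=> //; exists x; last exact: adj_edge j. Qed.

Lemma connected_edge_out (F : {set E}) (C : {set V}) c z :
  connected_graph F -> c \in C -> z \notin C ->
  exists x y, [/\ x \in C, y \notin C & adj F x y].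
Proof.
move=> conn cC zC.
have [/existsP[x /existsP[y /and3P[xC yC xy]]]|noOut] :=
  boolP [exists x, exists y, [&& x \in C, y \notin C & adj F x y]]; first by exists x, y.
have closedC : closed (adj F) C.
  apply: (intro_closed (sym_connect_sym (adj_sym F))) => x y xy xC.
  apply: contraNT noOut => yC.
  by apply/existsP; exists x; apply/existsP; exists y; rewrite xC yC xy.
by move: zC; rewrite -(closed_connect closedC (conn c z)) cC.
Qed.

Lemma connected_setD1 (F : {set E}) f u a :
  connected_graph F -> joins f u a -> connect (adj (F :\ f)) u a ->
  connected_graph (F :\ f).
Proof.
move=> conn jf ua x y; apply: connect_sub (conn x y) => x' y' /adjP[e eF j].
have [ef|nef] := eqVneq e f; last by apply/connect1/(adj_edge _ j); rewrite !inE nef.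
rewrite {e eF}ef in j; have [ix iy] := joins_incident j; have := joins_neq j.
case: (incident_joins jf ix) => ->; case: (incident_joins jf iy) => -> //; rewrite ?eqxx //.
by rewrite (sym_connect_sym (adj_sym _)).
Qed.

Lemma nbhd_setD1_notin (F : {set E}) (B S : {set V}) f u a :
  joins f u a -> u \notin S -> a \notin S ->
  nbhd (adj F) B S \subset nbhd (adj (F :\ f)) B S.
Proof.
move=> jf uS aS; apply/subsetP=> y /nbhdP[yB [t tS /adjP[e eF j]]].
apply: (mem_nbhd_edge _ j tS yB); rewrite !inE eF andbT.
apply: contraTneq tS => ef; have [it _] := joins_incident j.
by rewrite ef in it; case: (incident_joins jf it) => ->.
Qed.

Lemma nbhd_setD1 (F : {set E}) (B S : {set V}) f u a :
  joins f u a -> a \notin S -> nbhd (adj F) B S \subset a |: nbhd (adj (F :\ f)) B S.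
Proof.
move=> jf aS; apply/subsetP=> y /nbhdP[yB [t tS /adjP[e eF j]]]; rewrite in_setU1.
have [ef|nef] := eqVneq e f; last by rewrite (mem_nbhd_edge _ j tS yB) ?orbT // !inE nef.
have [it _] := joins_incident j; rewrite ef in it j.
case: (incident_joins jf it) => tE; last by rewrite -tE tS in aS.
by rewrite tE in j; rewrite (joins_eq j jf) eqxx.
Qed.

Section Partner.
Variables (F M : {set E}).
Hypothesis pmM : perfect_matching F M.

Lemma perfect_matching_edge v : exists e, [/\ e \in M, e \in F & incident e v].
Proof.
have [/subsetP MF /(_ v) /eqP/cards1P[e0 Mv]] := pmM.
by have := set11 e0; rewrite -Mv inE => /andP[e0M ?]; exists e0; rewrite (MF _ e0M).
Qed.

Lemma perfect_matching_uniq e e' v :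
  e \in M -> incident e v -> e' \in M -> incident e' v -> e = e'.
Proof.
have [_ /(_ v) /eqP/cards1P[e0 Mv]] := pmM => eM ev e'M e'v.
have Mv_e0 d : d \in M -> incident d v -> d = e0.
  by move=> dM dv; apply/set1P; rewrite -Mv inE dM dv.
by rewrite (Mv_e0 e eM ev) (Mv_e0 e' e'M e'v).
Qed.

Definition partner v : V :=
  odflt v (omap (other_end^~ v) [pick e in M | incident e v]).

Lemma partner_edge v : exists e, [/\ e \in M, e \in F & joins e v (partner v)].
Proof.
have [e [eM eF ev]] := perfect_matching_edge v; exists e; split=> //.
rewrite /partner; case: pickP => [e' /andP[e'M e'v]|/(_ e)]; last by rewrite eM ev.
by rewrite (perfect_matching_uniq e'M e'v eM ev); apply: joins_other_end.
Qed.

Lemma partnerE e v w : e \in M -> joins e v w -> partner v = w.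
Proof.
move=> eM j; have [e' [e'M _ j']] := partner_edge v.
have [ev _] := joins_incident j; have [e'v _] := joins_incident j'.
by rewrite (perfect_matching_uniq e'M e'v eM ev) in j'; apply: joins_eq j' j.
Qed.

Lemma partnerK : involutive partner.
Proof.
by move=> v; have [e [eM _ j]] := partner_edge v; rewrite joinsC in j; apply: partnerE j.
Qed.

Lemma partner_inj : injective partner.
Proof. exact: inv_inj partnerK. Qed.
End Partner.

Definition cycle4 (F : {set E}) u a w b f1 g1 g2 f2 : Prop :=
  [/\ uniq [:: u; a; w; b], [&& f1 \in F, g1 \in F, g2 \in F & f2 \in F],
      joins f1 u a, joins g1 a w & joins g2 w b /\ joins f2 b u].

Lemma cycle4_rev (F : {set E}) u a w b f1 g1 g2 f2 :
  cycle4 F u a w b f1 g1 g2 f2 -> cycle4 F u b w a f2 g2 g1 f1.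
Proof.
case=> uniq4 /and4P[f1F g1F g2F f2F] jf1 jg1 [jg2 jf2]; split; rewrite ?f1F ?g1F ?g2F ?f2F //.
- by rewrite -[[:: u; b; w; a]]/(rev (rot 1 [:: u; a; w; b])) rev_uniq rot_uniq.
- by rewrite joinsC.
- by rewrite joinsC.
- by split; rewrite joinsC.
Qed.

Lemma cycle4_edges_uniq (F : {set E}) u a w b f1 g1 g2 f2 :
  cycle4 F u a w b f1 g1 g2 f2 -> uniq [:: f1; g1; g2; f2].
Proof.
case=> uniq4 _ jf1 jg1 [jg2 jf2].
move: uniq4; rewrite /= !inE !negb_or => /and4P[/and3P[ua uw ub] /andP[aw ab] wb _].
have jg1' : joins g1 w a by rewrite joinsC.
have jg2' : joins g2 b w by rewrite joinsC.
have jf2' : joins f2 u b by rewrite joinsC.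
apply/and4P; split=> //; [apply/and3P; split | apply/andP; split | ].
- by apply: (edge_neq jf1 jg1'); rewrite eq_sym.
- by apply: (edge_neq jf1 jg2); rewrite eq_sym.
- by apply: (edge_neq jf1 jf2); rewrite eq_sym.
- by apply: (edge_neq jg1 jg2'); rewrite eq_sym.
- by apply: (edge_neq jg1 jf2); rewrite eq_sym.
- exact: edge_neq jg2 jf2' uw ub.
Qed.

Lemma cycle4_setD1 (F : {set E}) u a w b f1 g1 g2 f2 :
  cycle4 F u a w b f1 g1 g2 f2 -> [/\ g1 \in F :\ f1, g2 \in F :\ f1 & f2 \in F :\ f1].
Proof.
move=> cyc; have := cycle4_edges_uniq cyc; case: cyc => _ /and4P[_ g1F g2F f2F] _ _ _.
rewrite /= !inE !negb_or => /and4P[/and3P[f1g1 f1g2 f1f2] _ _ _].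
by rewrite g1F g2F f2F !(eq_sym _ f1) f1g1 f1g2 f1f2.
Qed.

Lemma cycle4_connect (F : {set E}) u a w b f1 g1 g2 f2 :
  cycle4 F u a w b f1 g1 g2 f2 -> connect (adj (F :\ f1)) u a.
Proof.
move=> cyc; have [g1F g2F f2F] := cycle4_setD1 cyc; case: cyc => _ _ _ jg1 [jg2 jf2].
rewrite (sym_connect_sym (adj_sym _)).
apply: connect_trans (connect1 (adj_edge g1F jg1)) _.
exact: connect_trans (connect1 (adj_edge g2F jg2)) (connect1 (adj_edge f2F jf2)).
Qed.

Lemma deg_gt2_other_edge (F : {set E}) u f1 f2 :
  3 <= deg ep1 ep2 F u -> exists h c, [/\ h \in F :\ f1, h \in F :\ f2 & joins h u c].
Proof.
rewrite /deg; set D := [set e in F | incident e u] => deg3.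
have : 0 < #|D :\ f1 :\ f2|.
  have := cardsD1 f1 D; have := cardsD1 f2 (D :\ f1).
  have := leq_b1 (f1 \in D); have := leq_b1 (f2 \in D :\ f1); lia.
rewrite card_gt0 => /set0Pn[h]; rewrite !inE => /and4P[hf2 hf1 hF hu].
by exists h, (other_end h u); rewrite !inE hf1 hf2 hF (joins_other_end hu).
Qed.

Section Bipartition.
Variable X : {set V}.

Definition bipartition (F : {set E}) : Prop :=
  forall e, e \in F -> (ep1 e \in X) != (ep2 e \in X).

Lemma bipartition_joins (F : {set E}) e x y :
  bipartition F -> e \in F -> joins e x y -> (y \in X) = (x \notin X).
Proof.
move=> bipX /bipX; rewrite /Defs.joins => + /orP[]/andP[/eqP<- /eqP<-];
by case: (ep1 e \in X); case: (ep2 e \in X).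
Qed.

Lemma bipartition_edge (F : {set E}) e :
  bipartition F -> e \in F -> exists x y, [/\ x \in X, y \notin X & joins e x y].
Proof.
move=> bipX eF; have j12 : joins e (ep1 e) (ep2 e) by rewrite /Defs.joins !eqxx.
have := bipartition_joins bipX eF j12; have [x1X|x1X] := boolP (ep1 e \in X) => x2X.
  by exists (ep1 e), (ep2 e); rewrite x2X x1X.
by exists (ep2 e), (ep1 e); rewrite x2X x1X joinsC.
Qed.

Lemma bipartition_subset (F F' : {set E}) : F' \subset F -> bipartition F -> bipartition F'.
Proof. by move=> /subsetP F'F bipX e /F'F /bipX. Qed.

Lemma partner_bipartition (F M : {set E}) v :
  bipartition F -> perfect_matching F M -> (partner M v \in X) = (v \notin X).
Proof.
by move=> bipX pm; have [e [_ eF j]] := partner_edge pm v; apply: bipartition_joins eF j.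
Qed.

Lemma card_bipartition (F M : {set E}) :
  bipartition F -> perfect_matching F M -> #|X| = #|~: X|.
Proof.
move=> bipX pm; have pX := partner_bipartition _ bipX pm.
have le1 : #|X| <= #|~: X|.
  rewrite -(card_imset _ (partner_inj pm)); apply/subset_leq_card/subsetP.
  by move=> _ /imsetP[x xX ->]; rewrite inE pX xX.
have le2 : #|~: X| <= #|X|.
  rewrite -(card_imset _ (partner_inj pm)); apply/subset_leq_card/subsetP.
  by move=> _ /imsetP[x xX ->]; rewrite pX -in_setC.
by apply/eqP; rewrite eqn_leq le1 le2.
Qed.

Local Notation N F S := (nbhd (adj F) (~: X) S).

Definition surplus (F : {set E}) : Prop :=
  forall S : {set V}, S \proper X -> S != set0 -> #|S| < #|N F S|.

(* An edge cd leaving S :|: N F S lies in a perfect matching M; as c \in N F S, the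
   M-partners of S cannot fill up N F S. *)
Lemma matching_covered_surplus (F : {set E}) :
  bipartition F -> matching_covered ep1 ep2 F -> surplus F.
Proof.
move=> bipX [conn [_ adm]] S SpX S0; have SX := proper_sub SpX.
have [s sS] := set0Pn _ S0; have /properP[_ [z zX zS]] := SpX.
have zC : z \notin S :|: N F S by rewrite in_setU (negbTE zS) /= inE inE zX.
have sC : s \in S :|: N F S by rewrite in_setU sS.
have [c [d [cC dC cd]]] := connected_edge_out conn sC zC.
have [e eF j] := adjP _ _ _ cd.
have [cS|cS] := boolP (c \in S).
  move: dC; rewrite in_setU (mem_nbhd_edge eF j cS) ?orbT //.
  by rewrite inE (bipartition_joins bipX eF j) (subsetP SX c cS).
have cN : c \in N F S by move: cC; rewrite in_setU (negbTE cS).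
have [M [pm eM]] := adm e eF.
have sub : partner M @: S \subset N F S.
  apply/subsetP=> _ /imsetP[x xS ->]; have [e' [_ e'F j']] := partner_edge pm x.
  by rewrite (mem_nbhd_edge e'F j' xS) // inE (partner_bipartition _ bipX pm) (subsetP SX x xS).
rewrite ltn_neqAle -(card_imset S (partner_inj pm)) (subset_leq_card sub) andbT.
apply/negP=> /eqP eqc; have := subset_cardP eqc sub c; rewrite cN.
case/imsetP=> x xS cx; move: dC; rewrite -(partnerE pm eM j) cx (partnerK pm).
by rewrite in_setU xS.
Qed.

Lemma perfect_matching_of_fun (F : {set E}) g (pe : V -> E) :
  #|X| = #|~: X| -> matching_fun (adj F) X (~: X) g ->
  {in X, forall v, pe v \in F /\ joins (pe v) v (g v)} -> perfect_matching F (pe @: X).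
Proof.
move=> bal [gP gI] peP; have gX v : v \in X -> g v \notin X by move=> /gP[]; rewrite inE.
split; first by apply/subsetP=> _ /imsetP[x xX ->]; have [] := peP x xX.
have pe_at v x : x \in X -> incident (pe x) v -> v = x \/ v = g x.
  by move=> xX; have [_ j] := peP x xX; apply: incident_joins j.
move=> v; apply/eqP/cards1P.
have [vX|vX] := boolP (v \in X).
  exists (pe v); apply/setP=> e; rewrite !inE; apply/andP/eqP=> [[/imsetP[x xX ->] vx]|->].
    by case: (pe_at v x xX vx) => [->//|vg]; rewrite vg (negbTE (gX x xX)) in vX.
  by have [_ /joins_incident[? _]] := peP v vX; rewrite imset_f.
have gXonto : g @: X \subset ~: X by apply/subsetP=> _ /imsetP[x xX ->]; rewrite inE gX.
have := subset_cardP (etrans (card_in_imset gI) bal) gXonto v; rewrite inE vX.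
case/imsetP=> x0 x0X ->; exists (pe x0); apply/setP=> e; rewrite !inE.
apply/andP/eqP=> [[/imsetP[x xX ->] vx]|->].
  case: (pe_at _ x xX vx) => [gx|/gI-> //]; by rewrite -gx (negbTE (gX x0 x0X)) in xX.
by have [_ /joins_incident[_ ?]] := peP x0 x0X; rewrite imset_f.
Qed.

Lemma admissible_of_surplus (F : {set E}) e :
  bipartition F -> #|X| = #|~: X| -> surplus F -> e \in F -> admissible ep1 ep2 F e.
Proof.
move=> bipX bal surp eF; have [x [y [xX yX j]]] := bipartition_edge bipX eF.
have [g gM] : matchable (adj F) (X :\ x) (~: X :\ y).
  apply/hall/hall_condition_setD1=> S SXx S0; apply: surp (S0); apply/properP.
  split; first exact: subset_trans SXx (subsetDl X _).
  by exists x => //; apply/negP=> /(subsetP SXx); rewrite !inE eqxx.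
have yM : matching_fun (adj F) [set x] (~: X :&: [set y]) (fun=> y).
  split=> [_ /set1P->|_ _ /set1P-> /set1P->] //.
  by rewrite !inE yX eqxx (adj_edge eF j).
have [gP _] := gM.
pose pe v := if v \in [set x] then e else odflt e [pick e' in F | joins e' v (g v)].
exists (pe @: X); split; last by apply/imsetP; exists x; rewrite // /pe set11.
apply: perfect_matching_of_fun bal (matching_fun_glue yM gM) _ => v vX.
rewrite /pe; case: ifPn => [/set1P->//|vx].
have [_ /adjP[e' e'F j']] : g v \in ~: X :\ y /\ adj F v (g v) by apply: gP; rewrite inE vx.
by case: pickP => [e'' /andP[]|/(_ e')]; rewrite ?e'F ?j'.
Qed.

Lemma removable_of_surplus (F : {set E}) f :
  bipartition F -> matching_covered ep1 ep2 F -> f \in F ->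
  connected_graph (F :\ f) -> surplus (F :\ f) -> removable ep1 ep2 F f.
Proof.
move=> bipX [_ [V2 adm]] fF connf surpf; split=> //; split=> //; split=> // e eFf.
have [M [pm _]] := adm f fF.
apply: admissible_of_surplus surpf eFf; first exact: bipartition_subset (subD1set F f) bipX.
exact: card_bipartition pm.
Qed.

(* What a violation of [surplus (F :\ f)] leaves behind, for f = ua. *)
Definition barrier (F : {set E}) f u a (T : {set V}) : Prop :=
  [/\ T \subset X, u \in T, a \notin N (F :\ f) T & #|N F T| <= #|T|.+1].

Lemma surplus_setD1_or_barrier (F : {set E}) f u a :
  bipartition F -> matching_covered ep1 ep2 F -> f \in F -> joins f u a -> u \in X ->
  surplus (F :\ f) \/ exists T, barrier F f u a T.
Proof.
move=> bipX mc fF jf uX; have aX : a \notin X by rewrite (bipartition_joins bipX fF jf) uX.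
have [/existsP[S /and3P[SpX S0 tight]]|noTight] := boolP [exists S : {set V},
  [&& S \proper X, S != set0 & #|N (F :\ f) S| <= #|S|]]; last first.
  left=> S SpX S0; move: noTight; rewrite negb_exists => /forallP/(_ S).
  by rewrite SpX S0 ltnNge.
have SX := proper_sub SpX; have aS : a \notin S by apply: contra aX; apply: (subsetP SX).
right; exists S.
have surpS := matching_covered_surplus bipX mc SpX S0.
have := subset_leq_card (nbhd_setD1 F (~: X) jf aS); rewrite cardsU1 => le.
split=> //.
- apply: contraTT surpS => uS; rewrite -leqNgt (leq_trans _ tight) //.
  exact/subset_leq_card/(nbhd_setD1_notin _ _ jf uS aS).
- by apply: contraTN surpS => aN; rewrite -leqNgt (leq_trans _ tight) // (leq_trans le) ?aN.
- by case: (a \notin _) le => /=; lia.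
Qed.

Lemma cycle4_removable_or_barrier (F : {set E}) u a w b f1 g1 g2 f2 :
  bipartition F -> matching_covered ep1 ep2 F -> u \in X -> cycle4 F u a w b f1 g1 g2 f2 ->
  removable ep1 ep2 F f1 \/ exists T, barrier F f1 u a T.
Proof.
move=> bipX mc uX cyc; have [_ /and4P[f1F _ _ _] jf1 _ _] := cyc.
case: (surplus_setD1_or_barrier bipX mc f1F jf1 uX) => [surpf|]; last by right.
left; apply: removable_of_surplus surpf => //; case: mc => conn _.
exact: connected_setD1 conn jf1 (cycle4_connect cyc).
Qed.

Lemma barrier_notin (F : {set E}) f u a (T : {set V}) e t :
  barrier F f u a T -> e \in F :\ f -> joins e t a -> a \notin X -> t \notin T.
Proof.
by move=> [_ _ aN _] eF j aX; apply: contra aN => tT; apply: mem_nbhd_edge eF j tT _; rewrite inE.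
Qed.

Lemma barrier_private (F : {set E}) f u a c e (T S : {set V}) :
  barrier F f u a T -> joins f u a -> a \notin X -> e \in F :\ f -> joins e u c ->
  S \subset T -> a \notin c |: N F (S :\ u).
Proof.
move=> bT jf aX eF j ST; have [TX uT aN _] := bT.
rewrite in_setU1 negb_or; apply/andP; split.
  by apply: contraTneq uT => ac; apply: (barrier_notin bT eF _ aX); rewrite ac.
have uS : u \notin S :\ u by rewrite !inE eqxx.
have aS : a \notin S :\ u by apply: contra aX => /setD1P[_ /(subsetP ST)/(subsetP TX)].
apply: contra aN => /(subsetP (nbhd_setD1_notin F (~: X) jf uS aS)).
by apply/subsetP/nbhdS; apply: subset_trans (subD1set S u) ST.
Qed.

(* Submodularity of #|N F _|. *)
Lemma card_nbhd_setI (F : {set E}) (T1 T2 : {set V}) :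
  surplus F -> T1 :|: T2 \proper X -> T1 :|: T2 != set0 ->
  #|N F T1| <= #|T1|.+1 -> #|N F T2| <= #|T2|.+1 -> #|N F (T1 :&: T2)| <= #|T1 :&: T2|.+1.
Proof.
move=> surp UpX U0 le1 le2; have := surp _ UpX U0; rewrite nbhdU.
have : N F (T1 :&: T2) \subset N F T1 :&: N F T2 by rewrite subsetI !nbhdS ?subsetIl ?subsetIr.
move/subset_leq_card; have := cardsUI T1 T2; have := cardsUI (N F T1) (N F T2); lia.
Qed.

(* [c] takes care of the case U = [set u]. *)
Lemma card_nbhd_two_private (F : {set E}) (U : {set V}) u a b c :
  surplus F -> U \proper X -> u \in U -> a != b ->
  [/\ a \in N F U, b \in N F U & c \in N F U] ->
  a \notin c |: N F (U :\ u) -> b \notin c |: N F (U :\ u) -> #|U|.+2 <= #|N F U|.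
Proof.
move=> surp UpX uU ab [aN bN cN] aR bR; set R := U :\ u.
have sub : a |: (b |: (c |: N F R)) \subset N F U.
  by rewrite !subUset !sub1set aN bN cN nbhdS ?subD1set.
have := subset_leq_card sub; rewrite cardsU1 in_setU1 negb_or ab aR cardsU1 bR /=.
have RpX : R \proper X := sub_proper_trans (subD1set U u) UpX.
have ltR : #|R| < #|c |: N F R|.
  have [R0|R0] := eqVneq R set0.
    by rewrite R0 cards0 card_gt0; apply/set0Pn; exists c; rewrite setU11.
  exact: leq_trans (surp R RpX R0) (subset_leq_card (subsetUr _ _)).
move=> le; rewrite (cardsD1 u U) uU -/R add1n; apply: leq_trans le.
by rewrite !add1n !ltnS.
Qed.

Lemma barriers_incompatible (F : {set E}) u a w b f1 g1 g2 f2 h c T1 T2 :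
  bipartition F -> matching_covered ep1 ep2 F -> cycle4 F u a w b f1 g1 g2 f2 ->
  barrier F f1 u a T1 -> barrier F f2 u b T2 ->
  h \in F :\ f1 -> h \in F :\ f2 -> joins h u c -> False.
Proof.
move=> bipX mc cyc bT1 bT2 hF1 hF2 jh.
have [g1F _ _] := cycle4_setD1 cyc; have [g2F _ _] := cycle4_setD1 (cycle4_rev cyc).
case: cyc => uniq4 /and4P[f1F _ _ f2F] jf1 jg1 [jg2 jf2].
have ab : a != b by move: uniq4; rewrite /= !inE !negb_or => /and4P[_ /andP[_ ->]].
rewrite joinsC in jg1; rewrite joinsC in jf2.
have surp := matching_covered_surplus bipX mc.
have [T1X uT1 _ le1] := bT1; have [T2X uT2 _ le2] := bT2.
have uX := subsetP T1X u uT1.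
have aX : a \notin X by rewrite (bipartition_joins bipX f1F jf1) uX.
have bX : b \notin X by rewrite (bipartition_joins bipX f2F jf2) uX.
have wX : w \in X.
  by case/setD1P: g1F => _ g1F; move: aX; rewrite (bipartition_joins bipX g1F jg1) negbK.
have wT1 := barrier_notin bT1 g1F jg1 aX; have wT2 := barrier_notin bT2 g2F jg2 bX.
have UpX : T1 :|: T2 \proper X.
  by apply/properP; rewrite subUset T1X T2X; split=> //; exists w; rewrite // in_setU negb_or wT1.
have U0 : T1 :|: T2 != set0 by apply/set0Pn; exists u; rewrite in_setU uT1.
have upper := card_nbhd_setI surp UpX U0 le1 le2.
have IpX := sub_proper_trans (subset_trans (subsetIl T1 T2) (subsetUl T1 T2)) UpX.
have uI : u \in T1 :&: T2 by rewrite inE uT1.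
have hF : h \in F by case/setD1P: hF1.
have N3 : [/\ a \in N F (T1 :&: T2), b \in N F (T1 :&: T2) & c \in N F (T1 :&: T2)].
  have cX : c \notin X by rewrite (bipartition_joins bipX hF jh) uX.
  by split; [apply: (mem_nbhd_edge f1F jf1 uI) | apply: (mem_nbhd_edge f2F jf2 uI) |
             apply: (mem_nbhd_edge hF jh uI)]; rewrite inE.
have := card_nbhd_two_private surp IpX uI ab N3
  (barrier_private bT1 jf1 aX hF1 jh (subsetIl _ _))
  (barrier_private bT2 jf2 bX hF2 jh (subsetIr _ _)).
by rewrite ltnNge upper.
Qed.
End Bipartition.

Lemma bipartition_mem (F : {set E}) (X0 : {set V}) u :
  bipartition X0 F -> exists2 X, bipartition X F & u \in X.
Proof.
move=> bX0; have [uX0|uX0] := boolP (u \in X0); first by exists X0.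
exists (~: X0); rewrite ?inE // => e /bX0; rewrite !inE.
by case: (_ \in X0); case: (_ \in X0).
Qed.
End Graphs.

Theorem mainTheorem4 (V E : finType) (ep1 ep2 : E -> V)
  (loopless : forall e : E, ep1 e != ep2 e)
  (F : {set E}) (u : V) (f1 f2 : E) :
  bipartite ep1 ep2 F ->
  matching_covered ep1 ep2 F ->
  3 <= deg ep1 ep2 F u ->
  in_common_4cycle ep1 ep2 F u f1 f2 ->
  removable ep1 ep2 F f1 \/ removable ep1 ep2 F f2.
Proof.
move=> [X0 bX0] mc deg3 [a [w [b [g1 [g2 cyc]]]]].
have [X bipX uX] := bipartition_mem u bX0.
have [h [c [hF1 hF2 jh]]] := deg_gt2_other_edge loopless f1 f2 deg3.
have [|[T1 bT1]] := cycle4_removable_or_barrier loopless bipX mc uX cyc; first by left.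
have [|[T2 bT2]] := cycle4_removable_or_barrier loopless bipX mc uX (cycle4_rev cyc).
  by right.
by case: (barriers_incompatible loopless bipX mc cyc bT1 bT2 hF1 hF2 jh).
Qed.
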